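(* Let $\epsilon\in\{+1,-1\}$ and $s\ge0$, and let $G_3^{s,\epsilon}=(P_1,P_2,P_3)/Q$ with $P_1=256\epsilon z+96izw+64\epsilon s w^2+64z^3+64i\epsilon s z^2w-3(3\epsilon-16s^2)zw^2+4isw^3$, $P_2=256\epsilon z^2-16w^2+256sz^3+16iz^2w-16\epsilon s zw^2-i\epsilon w^3$, $P_3=w\bigl(256\epsilon-32iw+64z^2-64i\epsilon s zw-(\epsilon+16s^2)w^2\bigr)$, $Q=256\epsilon-32iw+64z^2-192i\epsilon s zw-(17\epsilon+144s^2)w^2+32i\epsilon z^2w+24szw^2+iw^3$. Then $G_3^{s,\epsilon}$ is of degree $2$ if and only if $\epsilon=-1$ and $s=\frac12$.
   Context: For a rational holomorphic map $H=(P_1,\dots,P_{N'})/Q$ with polynomials $P_k,Q$, $H$ is reduced if $P_1,\dots,P_{N'},Q$ have no common factor, and the degree of a reduced rational map is $\max(\deg P_1,\dots,\deg P_{N'},\deg Q)$; the degree of a rational map is that of its reduced representation. *)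

From HB Require Import structures.
From mathcomp Require Import all_boot all_order all_algebra.
From mathcomp Require Import complex.
From mathcomp Require Import mpoly.
Set Implicit Arguments. Unset Strict Implicit. Unset Printing Implicit Defensive.
Import Order.TTheory GRing.Theory Num.Theory.
Local Open Scope ring_scope.

(* total degree of a polynomial (msize p = 1 + total degree, 0 for p = 0) *)
Definition mtdeg (n : nat) (F : idomainType) (p : {mpoly F[n]}) : nat :=
  (msize p).-1.

Definition common_factor (n N : nat) (F : idomainType)
    (P : 'I_N -> {mpoly F[n]}) (Q : {mpoly F[n]}) : Prop :=
  exists D : {mpoly F[n]}, (1 < msize D)%N /\
    (exists A : {mpoly F[n]}, Q = D * A) /\
    (forall k, exists A : {mpoly F[n]}, P k = D * A).

Definition reduced (n N : nat) (F : idomainType)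
    (P : 'I_N -> {mpoly F[n]}) (Q : {mpoly F[n]}) : Prop :=
  ~ common_factor P Q.

Definition rep_degree (n N : nat) (F : idomainType)
    (P : 'I_N -> {mpoly F[n]}) (Q : {mpoly F[n]}) : nat :=
  maxn (\max_(k < N) mtdeg (P k)) (mtdeg Q).

(* The rational map P/Q (Q <> 0) has degree d: d is the degree of its reduced
   representation, i.e. of a reduced P'/Q' defining the same rational map. *)
Definition rat_map_degree_is (n N : nat) (F : idomainType)
    (P : 'I_N -> {mpoly F[n]}) (Q : {mpoly F[n]}) (d : nat) : Prop :=
  Q != 0 /\
  exists (P' : 'I_N -> {mpoly F[n]}) (Q' : {mpoly F[n]}),
    [/\ Q' != 0, reduced P' Q', (forall k, P k * Q' = P' k * Q)
      & rep_degree P' Q' = d].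

Section G3.
Variable R : rcfType.
Local Notation C := R[i].
Local Notation MP := {mpoly C[2]}.

Definition cR (x : R) : MP := (Complex x 0 : C)%:MP.
Definition iM : MP := (Complex 0 1 : C)%:MP.
Definition zM : MP := 'X_(@Ordinal 2 0 isT).
Definition wM : MP := 'X_(@Ordinal 2 1 isT).

Variables (e s : R).
Local Notation z := zM.
Local Notation w := wM.
Local Notation I := iM.
Local Notation E := (cR e).
Local Notation S := (cR s).

Definition G3_P1 : MP :=
  256 * E * z + 96 * I * z * w + 64 * E * S * w ^+ 2 + 64 * z ^+ 3
  + 64 * I * E * S * z ^+ 2 * w - 3 * (3 * E - 16 * S ^+ 2) * z * w ^+ 2
  + 4 * I * S * w ^+ 3.

Definition G3_P2 : MP :=
  256 * E * z ^+ 2 - 16 * w ^+ 2 + 256 * S * z ^+ 3 + 16 * I * z ^+ 2 * w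
  - 16 * E * S * z * w ^+ 2 - I * E * w ^+ 3.

Definition G3_P3 : MP :=
  w * (256 * E - 32 * I * w + 64 * z ^+ 2 - 64 * I * E * S * z * w
       - (E + 16 * S ^+ 2) * w ^+ 2).

Definition G3_Q : MP :=
  256 * E - 32 * I * w + 64 * z ^+ 2 - 192 * I * E * S * z * w
  - (17 * E + 144 * S ^+ 2) * w ^+ 2 + 32 * I * E * z ^+ 2 * w
  + 24 * S * z * w ^+ 2 + I * w ^+ 3.

Definition G3_P (k : 'I_3) : MP :=
  match val k with 0 => G3_P1 | 1 => G3_P2 | _ => G3_P3 end.
End G3.

From HB Require Import structures.
From mathcomp Require Import all_boot all_order all_algebra.
From mathcomp Require Import complex.
From mathcomp Require Import mpoly.
From mathcomp Require Import ring zify lra.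
Import Order.TTheory GRing.Theory Num.Theory.
Local Open Scope complex_scope.
Local Open Scope ring_scope.
Set Implicit Arguments. Unset Strict Implicit. Unset Printing Implicit Defensive.

(* The second component factors as P_2 = (16 z^2 - e w^2) L with L = 16 e + 16 s z + i w,
   i.e. it vanishes on three lines.  If P/Q = P'/Q' with P', Q' of degree at most 2, then
   P_2 Q' = P'_2 Q, so P'_2 vanishes on each of these lines on which Q does not vanish
   identically.  Q is 256 e at the origin, and 9216 (e + 4 s^2) at the point (0, 16 i e) of
   L = 0; so if e + 4 s^2 <> 0, the conic P'_2 contains three lines, hence P'_2 = 0 and
   Q' = 0.  Conversely e + 4 s^2 = 0 forces e = -1 and s = 1/2, where L divides every
   component and the quotients form a reduced representation of degree 2. *)

Definition ordz : 'I_2 := @Ordinal 2 0 isT.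
Definition ordw : 'I_2 := @Ordinal 2 1 isT.
Definition pt {T : Type} (a b : T) (j : 'I_2) : T := if val j == 0%N then a else b.
Definition mnm2 (a b : nat) : 'X_{1..2} := (U_(ordz) *+ a + U_(ordw) *+ b)%MM.

Lemma mnm2E a b j : mnm2 a b j = pt a b j.
Proof.
rewrite /mnm2 mnmDE !mulmnE !mnm1E /pt.
by case: j => [[|[|j]] ?] //=; rewrite ?muln1 ?mul1n ?muln0 ?mul0n ?addn0.
Qed.

Lemma eq_mnm2 a b c d : (mnm2 a b == mnm2 c d) = (a == c) && (b == d).
Proof.
apply/eqP/andP => [eq_ab_cd|[/eqP -> /eqP ->]] //.
have := congr1 (fun m : 'X_{1..2} => (m ordz, m ordw)) eq_ab_cd.
by rewrite /= !mnm2E /pt /= => -[-> ->].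
Qed.

Lemma mnm2_coords (m : 'X_{1..2}) : m = mnm2 (m ordz) (m ordw).
Proof.
apply/mnmP => j; rewrite mnm2E /pt.
by case: j => [[|[|j]] ?] //=; congr (m _); apply: val_inj.
Qed.

Lemma mdeg_mnm2 a b : mdeg (mnm2 a b) = (a + b)%N.
Proof. by rewrite /mnm2 mdegD !mdegMn !mdeg1 !mul1n. Qed.

Lemma rep_degree_msize_le n N (F : idomainType) (P : 'I_N -> {mpoly F[n]}) Q d :
  rep_degree P Q = d -> forall k, (msize (P k) <= d.+1)%N.
Proof.
rewrite /rep_degree /mtdeg => <- k; apply: leq_trans (leqSpred _) _; rewrite ltnS.
by apply: leq_trans (leq_maxl _ _); exact: leq_bigmax.
Qed.

Lemma mevalXn n (R : comNzRingType) (v : 'I_n -> R) (p : {mpoly R[n]}) k :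
  (p ^+ k).@[v] = p.@[v] ^+ k.
Proof. exact: rmorphXn. Qed.

Lemma meval_neq0 n (R : comNzRingType) (v : 'I_n -> R) (p : {mpoly R[n]}) :
  p.@[v] != 0 -> p != 0.
Proof. by apply: contra => /eqP ->; rewrite meval0. Qed.

Section QuadraticMpoly.
Variable A : nzRingType.
Local Notation MP := {mpoly A[2]}.
Local Notation z := ('X_ordz : MP).
Local Notation w := ('X_ordw : MP).
Implicit Types (p : MP) (c : nat -> nat -> A).

Lemma mpolyX_mnm2 a b : 'X_[mnm2 a b] = z ^+ a * w ^+ b :> MP.
Proof. by rewrite /mnm2 mpolyXD -!mpolyXn. Qed.

Definition quad c : MP :=
  (c 0 0)%:MP + (c 1 0)%:MP * z + (c 0 1)%:MP * w
  + (c 2 0)%:MP * z ^+ 2 + (c 1 1)%:MP * (z * w) + (c 0 2)%:MP * w ^+ 2.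

Lemma quad_monomials c : quad c =
  c 0 0 *: 'X_[mnm2 0 0] + c 1 0 *: 'X_[mnm2 1 0] + c 0 1 *: 'X_[mnm2 0 1]
  + c 2 0 *: 'X_[mnm2 2 0] + c 1 1 *: 'X_[mnm2 1 1] + c 0 2 *: 'X_[mnm2 0 2].
Proof. by rewrite !mpolyX_mnm2 /quad -!mul_mpolyC !expr0 !expr1 !mulr1 !mul1r. Qed.

Lemma msize_quad c : (msize (quad c) <= 3)%N.
Proof.
have msize_term a b d : (a + b <= 2)%N -> (msize (d *: 'X_[mnm2 a b] : MP) <= 3)%N.
  by move=> ab; apply: leq_trans (msizeZ_le _ _) _; rewrite msizeX mdeg_mnm2 ltnS.
have msize_add p q : (msize p <= 3)%N -> (msize q <= 3)%N -> (msize (p + q) <= 3)%N.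
  by move=> p3 q3; rewrite (leq_trans (msizeD_le _ _)) // geq_max p3.
by rewrite quad_monomials !msize_add ?msize_term.
Qed.

Lemma mcoeff_quad c a b : (a + b <= 2)%N -> (quad c)@_(mnm2 a b) = c a b.
Proof.
rewrite quad_monomials !mcoeffD !mcoeffZ !mcoeffX !eq_mnm2.
by case: a => [|[|[|a]]]; case: b => [|[|[|b]]] //= _; rewrite ?mulr0 ?mulr1 ?addr0 ?add0r.
Qed.

Lemma quad_mcoeff p : (msize p <= 3)%N -> p = quad (fun a b => p@_(mnm2 a b)).
Proof.
move=> p3; apply/mpolyP => m; rewrite (mnm2_coords m).
move: (m ordz) (m ordw) => a b.
have [ab|ab] := leqP (a + b) 2; first by rewrite mcoeff_quad.
rewrite !memN_msupp_eq0 //; apply: msize_mdeg_ge; rewrite mdeg_mnm2.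
  exact: leq_trans (msize_quad _) ab.
exact: leq_trans p3 ab.
Qed.

End QuadraticMpoly.

Section BivariateQuadratic.
Variable F : fieldType.
Local Notation MP := {mpoly F[2]}.
Local Notation z := ('X_ordz : MP).
Local Notation w := ('X_ordw : MP).
Implicit Types (p q : MP) (c : nat -> nat -> F).

Lemma meval_quad c a b : (quad c).@[pt a b] =
  c 0 0 + c 1 0 * a + c 0 1 * b + c 2 0 * a ^+ 2 + c 1 1 * (a * b) + c 0 2 * b ^+ 2.
Proof. by rewrite /quad !mevalD !mevalM !mevalC !mevalXU /pt /=; ring. Qed.

Lemma linear_mpoly_root_on_axes p : msize p = 2%N ->
  exists a b, a * b = 0 /\ p.@[pt a b] = 0.
Proof.
move=> p2; have /quad_mcoeff p_quad : (msize p <= 3)%N by rewrite p2.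
have deg2_0 a b : (2 <= a + b)%N -> p@_(mnm2 a b) = 0.
  by move=> ab; apply/memN_msupp_eq0/msize_mdeg_ge; rewrite mdeg_mnm2 p2.
have p_lin x y : p.@[pt x y] = p@_(mnm2 0 0) + p@_(mnm2 1 0) * x + p@_(mnm2 0 1) * y.
  rewrite {1}p_quad meval_quad (deg2_0 2 0) // (deg2_0 1 1) // (deg2_0 0 2) //.
  by rewrite !mul0r !addr0.
have [c10_0|c10_neq0] := eqVneq p@_(mnm2 1 0) 0; last first.
  exists (- p@_(mnm2 0 0) / p@_(mnm2 1 0)), 0; rewrite mulr0 p_lin; split=> //.
  by rewrite mulr0 addr0 mulrC divfK // subrr.
have [c01_0|c01_neq0] := eqVneq p@_(mnm2 0 1) 0; last first.
  exists 0, (- p@_(mnm2 0 0) / p@_(mnm2 0 1)); rewrite mul0r p_lin; split=> //.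
  by rewrite mulr0 addr0 mulrC divfK // subrr.
move: p2; rewrite p_quad /quad c10_0 c01_0 (deg2_0 2 0) // (deg2_0 1 1) // (deg2_0 0 2) //.
by rewrite !mpolyC0 !mul0r !addr0 => /eqP; rewrite msizeC; case: (_ != 0).
Qed.

Definition restrict_line (l m : F) (p : MP) : {poly F} :=
  mmap polyC (pt 'X (l%:P * 'X + m%:P)) p.

HB.instance Definition _ (l m : F) :=
  GRing.RMorphism.copy (restrict_line l m) (mmap polyC (pt 'X (l%:P * 'X + m%:P))).

Lemma horner_restrict_line l m p x :
  (restrict_line l m p).[x] = p.@[pt x (l * x + m)].
Proof.
rewrite /restrict_line /mmap mevalE horner_sum; apply: eq_bigr => k _.
rewrite hornerM hornerC /mmap1 horner_prod; congr (_ * _); apply: eq_bigr => j _.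
rewrite horner_exp /pt; case: (val j == 0%N); rewrite ?hornerX //.
by rewrite hornerD hornerMX !hornerC.
Qed.

Lemma restrict_lineC l m a : restrict_line l m a%:MP = a%:P.
Proof. exact: mmapC. Qed.

Lemma restrict_line_z l m : restrict_line l m z = 'X.
Proof. by rewrite /restrict_line mmapX mmap1U. Qed.

Lemma restrict_line_w l m : restrict_line l m w = l%:P * 'X + m%:P.
Proof. by rewrite /restrict_line mmapX mmap1U. Qed.

Lemma restrict_line_quad l m c : restrict_line l m (quad c) =
  (c 0 0 + c 0 1 * m + c 0 2 * m ^+ 2)%:P
  + (c 1 0 + c 0 1 * l + c 1 1 * m + 2 * c 0 2 * l * m)%:P * 'X
  + (c 2 0 + c 1 1 * l + c 0 2 * l ^+ 2)%:P * 'X ^+ 2.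
Proof.
rewrite /quad !rmorphD !rmorphM /= !restrict_lineC restrict_line_z restrict_line_w.
by rewrite rmorph_nat; ring.
Qed.

Lemma quadratic_poly_eq0 (a0 a1 a2 : F) :
  a0%:P + a1%:P * 'X + a2%:P * 'X ^+ 2 = 0 -> [/\ a0 = 0, a1 = 0 & a2 = 0].
Proof.
move=> eq0; have coef_eq0 i := congr1 (fun p : {poly F} => p`_i) eq0.
have := coef_eq0 0%N; have := coef_eq0 1%N; have := coef_eq0 2%N.
by rewrite /= !coefD !coefCM !coefC !coefX !coefXn /= !mulr0 !mulr1 !addr0 !add0r => -> -> ->.
Qed.

Lemma mpoly_deg2_on_three_lines_eq0 (l k m : F) p : 2 != 0 :> F -> l != 0 -> m != 0 ->
  (msize p <= 3)%N -> restrict_line l 0 p = 0 -> restrict_line (- l) 0 p = 0 ->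
  restrict_line k m p = 0 -> p = 0.
Proof.
move=> two_neq0 l_neq0 m_neq0 /quad_mcoeff ->; set c := fun a b => _.
rewrite !restrict_line_quad.
move=> /quadratic_poly_eq0[c00_0 h10 h20] /quadratic_poly_eq0[_ h10' h20'].
move=> /quadratic_poly_eq0[h00 _ _].
rewrite expr0n !mulr0 !addr0 in c00_0 h10 h10'; rewrite sqrrN in h20'.
have c01_0 : c 0 1 = 0.
  apply: (mulIf (mulf_neq0 two_neq0 l_neq0)); rewrite mul0r.
  transitivity ((c 1 0 + c 0 1 * l) - (c 1 0 + c 0 1 * - l)); first by ring.
  by rewrite h10 h10' subrr.
have c11_0 : c 1 1 = 0.
  apply: (mulIf (mulf_neq0 two_neq0 l_neq0)); rewrite mul0r.
  transitivity ((c 2 0 + c 1 1 * l + c 0 2 * l ^+ 2) - (c 2 0 + c 1 1 * - l + c 0 2 * l ^+ 2)).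
    by ring.
  by rewrite h20 h20' subrr.
have c02_0 : c 0 2 = 0.
  apply: (mulIf (expf_neq0 2 m_neq0)); rewrite mul0r -h00.
  by rewrite c00_0 c01_0 mul0r !add0r.
rewrite c01_0 mul0r addr0 in h10; rewrite c11_0 c02_0 !mul0r !addr0 in h20.
by rewrite /quad c00_0 h10 h20 c01_0 c11_0 c02_0 mpolyC0 !mul0r !addr0.
Qed.

Lemma restrict_line_cofactor_eq0 l m p q p' q' : p * q' = p' * q ->
  restrict_line l m p = 0 -> q.@[pt 0 m] != 0 -> restrict_line l m p' = 0.
Proof.
move=> pq' rp0 qm_neq0; apply/eqP.
have : restrict_line l m p' * restrict_line l m q = 0.
  by rewrite -rmorphM -pq' rmorphM /= rp0 mul0r.
move/eqP; rewrite mulf_eq0 => /orP[//|/eqP rq0].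
have := horner_restrict_line l m q 0.
by rewrite rq0 horner0 mulr0 add0r => /esym q0; rewrite q0 eqxx in qm_neq0.
Qed.

End BivariateQuadratic.

Section Atoms.
Variable R : rcfType.
Local Notation C := R[i].

Lemma cRE (x : R) : cR x = (x%:C)%:MP.
Proof. by []. Qed.

Lemma cR_sqr1 (x : R) : x ^+ 2 = 1 -> cR x ^+ 2 = 1.
Proof. by move=> x2; rewrite cRE -!rmorphXn x2 !rmorph1. Qed.

Lemma realC_sqr1 (x : R) : x ^+ 2 = 1 -> x%:C ^+ 2 = 1 :> C.
Proof. by move=> x2; rewrite -rmorphXn x2 rmorph1. Qed.

Lemma iM_sqr : iM R ^+ 2 = -1.
Proof. by rewrite /iM -rmorphXn sqr_i rmorphN1. Qed.

Lemma meval_cR (x : R) (a b : C) : (cR x).@[pt a b] = x%:C.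
Proof. exact: mevalC. Qed.

Lemma meval_iM (a b : C) : (iM R).@[pt a b] = 'i.
Proof. exact: mevalC. Qed.

Lemma meval_zM (a b : C) : (zM R).@[pt a b] = a.
Proof. exact: mevalXU. Qed.

Lemma meval_wM (a b : C) : (wM R).@[pt a b] = b.
Proof. exact: mevalXU. Qed.

End Atoms.

(* Numerals are first turned into constants: matching [mevalM] against a numeral
   unfolds it and is very slow. *)
Ltac meval_simpl := rewrite -?mpolyC_nat
  ?(meval_cR, meval_iM, meval_zM, meval_wM, mevalC, mevalD, mevalB, mevalN, mevalM, mevalXn).

Section G3Obstruction.
Variable R : rcfType.
Local Notation C := R[i].
Local Notation MP := {mpoly C[2]}.
Local Notation z := (zM R).
Local Notation w := (wM R).
Local Notation I := (iM R).
Variables (e s : R).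
Hypothesis e2 : e ^+ 2 = 1.
Local Notation E := (cR e).
Local Notation S := (cR s).

Definition G3_cone : MP := 16 * z ^+ 2 - E * w ^+ 2.
Definition G3_L : MP := 16 * E + 16 * S * z + I * w.

Lemma e_neq0 : e != 0.
Proof. by apply/eqP => e0; move: e2; rewrite e0 expr0n => /esym/eqP; rewrite oner_eq0. Qed.

Lemma G3_P2_factor : G3_P2 e s = G3_cone * G3_L.
Proof. by have E2 := cR_sqr1 e2; rewrite /G3_P2 /G3_cone /G3_L; ring: E2. Qed.

Lemma meval_G3_Q_axis b : (G3_Q e s).@[pt 0 b] =
  256 * e%:C - 32 * 'i * b - (17 * e%:C + 144 * s%:C ^+ 2) * b ^+ 2 + 'i * b ^+ 3.
Proof. by rewrite /G3_Q; meval_simpl; ring. Qed.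

Lemma meval_G3_Q_origin : (G3_Q e s).@[pt 0 0] = 256 * e%:C.
Proof. by rewrite meval_G3_Q_axis; ring. Qed.

Lemma meval_G3_Q_on_L : (G3_Q e s).@[pt 0 (16 * 'i * e%:C)] = 9216 * (e + 4 * s ^+ 2)%:C.
Proof.
have e2C := realC_sqr1 e2; have i2 : 'i ^+ 2 = -1 :> C := sqr_i R.
by rewrite meval_G3_Q_axis rmorphD rmorphM rmorphXn rmorph_nat; ring: e2C i2.
Qed.

Lemma restrict_line_G3_L : restrict_line (16 * 'i * s%:C) (16 * 'i * e%:C) G3_L = 0.
Proof.
rewrite /G3_L -!mpolyC_nat !rmorphD !rmorphM /= !restrict_lineC restrict_line_z restrict_line_w.
have i2 : ('i%:P : {poly C}) ^+ 2 = -1 by rewrite -rmorphXn sqr_i rmorphN1.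
by rewrite !rmorphM !rmorph_nat; ring: i2.
Qed.

Lemma restrict_line_G3_cone (l : C) : l ^+ 2 = 16 * e%:C -> restrict_line l 0 G3_cone = 0.
Proof.
move=> l2; rewrite /G3_cone -!mpolyC_nat !rmorphB !rmorphM /=.
rewrite !restrict_lineC restrict_line_z restrict_line_w.
have e2P : ((e%:C)%:P : {poly C}) ^+ 2 = 1 by rewrite -rmorphXn realC_sqr1 ?rmorph1.
have l2P : (l%:P : {poly C}) ^+ 2 = 16 * (e%:C)%:P by rewrite -rmorphXn l2 rmorphM rmorph_nat.
by rewrite rmorph_nat; ring: e2P l2P.
Qed.

Lemma G3_P2_neq0 : G3_P2 e s != 0.
Proof.
rewrite G3_P2_factor; apply: mulf_neq0.
  apply: (meval_neq0 (v := pt 1 0)); rewrite /G3_cone; meval_simpl.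
  by rewrite !mulr1 !mul0r mulr0 subr0 pnatr_eq0.
apply: (meval_neq0 (v := pt 0 0)); rewrite /G3_L; meval_simpl.
by rewrite !mulr0 !addr0; apply: mulf_neq0; rewrite ?pnatr_eq0 // fmorph_eq0 e_neq0.
Qed.

Lemma G3_P2_cofactor_eq0 (P' Q' : MP) : e + 4 * s ^+ 2 != 0 ->
  (msize P' <= 3)%N -> G3_P2 e s * Q' = P' * G3_Q e s -> Q' = 0.
Proof.
move=> e4s2_neq0 P'3 PQ.
pose l := 4 * sqrtC e%:C.
have l2 : l ^+ 2 = 16 * e%:C by rewrite exprMn sqrtCK -natrX.
have Q_origin_neq0 : (G3_Q e s).@[pt 0 0] != 0.
  by rewrite meval_G3_Q_origin; apply: mulf_neq0; rewrite ?pnatr_eq0 // fmorph_eq0 e_neq0.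
have P'0 : P' = 0.
  apply: (@mpoly_deg2_on_three_lines_eq0 _ l (16 * 'i * s%:C) (16 * 'i * e%:C)) => //.
  - by rewrite pnatr_eq0.
  - by apply: mulf_neq0; rewrite ?pnatr_eq0 // sqrtC_eq0 fmorph_eq0 e_neq0.
  - by apply: mulf_neq0; [apply: mulf_neq0|]; rewrite ?pnatr_eq0 ?neq0Ci // fmorph_eq0 e_neq0.
  - apply: (restrict_line_cofactor_eq0 PQ) => //.
    by rewrite G3_P2_factor rmorphM /= restrict_line_G3_cone // mul0r.
  - apply: (restrict_line_cofactor_eq0 PQ) => //.
    by rewrite G3_P2_factor rmorphM /= restrict_line_G3_cone ?sqrrN // mul0r.
  - apply: (restrict_line_cofactor_eq0 PQ).
      by rewrite G3_P2_factor rmorphM /= restrict_line_G3_L mulr0.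
    rewrite meval_G3_Q_on_L; apply: mulf_neq0; first by rewrite pnatr_eq0.
    by rewrite fmorph_eq0.
by move: PQ; rewrite P'0 mul0r => /eqP; rewrite mulf_eq0 (negbTE G3_P2_neq0) => /eqP.
Qed.

End G3Obstruction.

Section G3Degenerate.
Variable R : rcfType.
Local Notation C := R[i].
Local Notation MP := {mpoly C[2]}.
Local Notation z := (zM R).
Local Notation w := (wM R).
Local Notation I := (iM R).

Definition L_half : MP := 8 * z + I * w - 16.
Definition P1_half : MP := 8 * z ^+ 2 - 5 * I * z * w + 2 * w ^+ 2 + 16 * z.
Definition P2_half : MP := 16 * z ^+ 2 + w ^+ 2.
Definition P3_half : MP := 8 * z * w + 3 * I * w ^+ 2 + 16 * w.
Definition Q_half : MP := 16 + 8 * z + 3 * I * w - 4 * I * z * w + w ^+ 2.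
Definition P_half (k : 'I_3) : MP :=
  match val k with 0 => P1_half | 1 => P2_half | _ => P3_half end.

Lemma cR_N1 : cR (-1 : R) = -1.
Proof. by rewrite cRE !rmorphN1. Qed.

(* [ring] cannot use [2 * cR (2^-1) = 1], so the factorisations are checked modulo
   [2 * cR (2^-1) - 1], with explicit quotients. *)
Lemma eq_modulo_half (A B D : MP) : A - B = (2 * cR (2^-1 : R) - 1) * D -> A = B.
Proof.
have -> : 2 * cR (2^-1 : R) = 1.
  rewrite cRE -mpolyC_nat -rmorphM -(rmorph_nat (real_complex R)) -rmorphM.
  by rewrite divff ?pnatr_eq0 // !rmorph1.
by rewrite subrr mul0r => /eqP; rewrite subr_eq0 => /eqP.
Qed.

Lemma G3_Q_half_factor : G3_Q (-1) (2^-1) = L_half * Q_half.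
Proof.
apply: (@eq_modulo_half _ _
  ((-36) * w ^+ 2 - 72 * w ^+ 2 * cR (2^-1) + 96 * I * z * w + 12 * z * w ^+ 2)).
by rewrite /G3_Q /L_half /Q_half cR_N1; ring: (iM_sqr R).
Qed.

Lemma G3_P_half_factor k : G3_P (-1) (2^-1) k = L_half * P_half k.
Proof.
rewrite /G3_P /P_half; case: k => [[|[|k]] _] /=.
- apply: (@eq_modulo_half _ _ ((-32) * w ^+ 2 + 2 * I * w ^+ 3 + 12 * z * w ^+ 2
    + 24 * z * w ^+ 2 * cR (2^-1) - 32 * I * z ^+ 2 * w)).
  by rewrite /G3_P1 /L_half /P1_half cR_N1; ring: (iM_sqr R).
- apply: (@eq_modulo_half _ _ (8 * z * w ^+ 2 + 128 * z ^+ 3)).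
  by rewrite /G3_P2 /L_half /P2_half cR_N1; ring: (iM_sqr R).
- apply: (@eq_modulo_half _ _
    ((-4) * w ^+ 3 - 8 * w ^+ 3 * cR (2^-1) + 32 * I * z * w ^+ 2)).
  by rewrite /G3_P3 /L_half /P3_half cR_N1; ring: (iM_sqr R).
Qed.

Lemma P1_half_quad : P1_half = quad (fun a b =>
  match a, b with 1, 0 => 16 | 2, 0 => 8 | 1, 1 => -5 * 'i | 0, 2 => 2 | _, _ => 0 end).
Proof.
rewrite /P1_half /quad /= !mpolyC0 rmorphM rmorphN /= !mpolyC_nat.
by rewrite -/(zM R) -/(wM R) -/(iM R); ring.
Qed.

Lemma P2_half_quad : P2_half = quad (fun a b =>
  match a, b with 2, 0 => 16 | 0, 2 => 1 | _, _ => 0 end).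
Proof.
by rewrite /P2_half /quad /= !mpolyC0 rmorph1 mpolyC_nat -/(zM R) -/(wM R); ring.
Qed.

Lemma P3_half_quad : P3_half = quad (fun a b =>
  match a, b with 0, 1 => 16 | 1, 1 => 8 | 0, 2 => 3 * 'i | _, _ => 0 end).
Proof.
rewrite /P3_half /quad /= !mpolyC0 rmorphM /= !mpolyC_nat.
by rewrite -/(zM R) -/(wM R) -/(iM R); ring.
Qed.

Lemma Q_half_quad : Q_half = quad (fun a b =>
  match a, b with
  | 0, 0 => 16 | 1, 0 => 8 | 0, 1 => 3 * 'i | 1, 1 => -4 * 'i | 0, 2 => 1 | _, _ => 0
  end).
Proof.
rewrite /Q_half /quad /= mpolyC0 rmorph1 !rmorphM rmorphN /= !mpolyC_nat.
by rewrite -/(zM R) -/(wM R) -/(iM R); ring.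
Qed.

Lemma msize_P_half k : (msize (P_half k) <= 3)%N.
Proof.
by rewrite /P_half; case: k => [[|[|k]] _] /=;
  rewrite ?P1_half_quad ?P2_half_quad ?P3_half_quad msize_quad.
Qed.

Lemma msize_Q_half : msize Q_half = 3%N.
Proof.
apply/eqP; rewrite eqn_leq {1}Q_half_quad msize_quad /=.
have := @msize_mdeg_lt _ _ Q_half (mnm2 1 1); rewrite mdeg_mnm2; apply.
by rewrite mcoeff_msupp Q_half_quad mcoeff_quad //= mulf_neq0 ?oppr_eq0 ?pnatr_eq0 ?neq0Ci.
Qed.

Lemma meval_P2_half a b : P2_half.@[pt a b] = 16 * a ^+ 2 + b ^+ 2.
Proof. by rewrite /P2_half; meval_simpl. Qed.

Lemma meval_P3_half a b : P3_half.@[pt a b] = 8 * a * b + 3 * 'i * b ^+ 2 + 16 * b.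
Proof. by rewrite /P3_half; meval_simpl. Qed.

Lemma meval_Q_half_origin : Q_half.@[pt 0 0] = 16.
Proof. by rewrite /Q_half; meval_simpl; ring. Qed.

Lemma P2_half_neq0 : P2_half != 0.
Proof.
apply: (meval_neq0 (v := pt 1 0)); rewrite meval_P2_half.
by rewrite expr1n mulr1 expr0n /= mulr0n addr0 pnatr_eq0.
Qed.

Lemma P3_half_neq0 : P3_half != 0.
Proof.
apply: (meval_neq0 (v := pt 0 'i)); rewrite meval_P3_half.
have i2 : 'i ^+ 2 = -1 :> C := sqr_i R.
have -> : 8 * 0 * 'i + 3 * 'i * 'i ^+ 2 + 16 * 'i = 13 * 'i :> C by ring: i2.
by rewrite mulf_neq0 ?pnatr_eq0 ?neq0Ci.
Qed.

Lemma Q_half_neq0 : Q_half != 0.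
Proof. by rewrite -msize_poly_eq0 msize_Q_half. Qed.

(* A common factor D divides Q_half, of degree 2.  If D is linear, it vanishes at a point
   of an axis, where P2_half = 16 z^2 + w^2 only vanishes at the origin, where Q_half does
   not.  If D has degree 2, the cofactors of P2_half and P3_half are constants, which
   contradicts P3_half (1, 0) = 0 <> P2_half (1, 0). *)
Lemma reduced_half : reduced P_half Q_half.
Proof.
move=> [D [D_size [[A QDA] PDA]]].
have [A2 P2DA] := PDA (@Ordinal 3 1 isT); have [A3 P3DA] := PDA (@Ordinal 3 2 isT).
rewrite /P_half /= in P2DA P3DA.
have D_neq0 : D != 0 by apply: contraNneq Q_half_neq0; rewrite QDA => ->; rewrite mul0r.
have A_neq0 : A != 0 by apply: contraNneq Q_half_neq0; rewrite QDA => ->; rewrite mulr0.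
have meval_D a b p Y : p = D * Y -> p.@[pt a b] = D.@[pt a b] * Y.@[pt a b].
  by move=> ->; rewrite mevalM.
have D00_neq0 : D.@[pt 0 0] != 0.
  apply/eqP => D00; move: (meval_D 0 0 _ _ QDA).
  by rewrite meval_Q_half_origin D00 mul0r => /eqP; rewrite pnatr_eq0.
have [D2|D3] : msize D = 2%N \/ msize D = 3%N.
  have := msizeM D_neq0 A_neq0; rewrite -QDA msize_Q_half.
  have : (0 < msize A)%N by rewrite lt0n msize_poly_eq0.
  by move: D_size; lia.
- have [a [b [ab0 Dab]]] := linear_mpoly_root_on_axes D2.
  have := meval_D a b _ _ P2DA; rewrite Dab mul0r meval_P2_half => ab_root.
  have [a0 b0] : a = 0 /\ b = 0.
    move/eqP: ab0; rewrite mulf_eq0 => /orP[] /eqP ab0; rewrite ab0 in ab_root *.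
    - by move: ab_root; rewrite expr0n /= mulr0n mulr0 add0r => /eqP; rewrite sqrf_eq0 => /eqP.
    - move: ab_root; rewrite expr0n /= mulr0n addr0 => /eqP.
      by rewrite mulf_eq0 pnatr_eq0 sqrf_eq0 => /eqP.
  by rewrite a0 b0 in Dab; rewrite Dab eqxx in D00_neq0.
- have cofactor_const Y p : p = D * Y -> p != 0 -> (msize p <= 3)%N -> Y = (Y@_0)%:MP.
    move=> pDY p_neq0 p3; apply: msize1_polyC.
    have Y_neq0 : Y != 0 by apply: contraNneq p_neq0; rewrite pDY => ->; rewrite mulr0.
    by move: p3; rewrite pDY msizeM // D3; lia.
  have A2E := cofactor_const _ _ P2DA P2_half_neq0 (msize_P_half (@Ordinal 3 1 isT)).
  have A3E := cofactor_const _ _ P3DA P3_half_neq0 (msize_P_half (@Ordinal 3 2 isT)).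
  have := meval_D 1 0 _ _ P2DA; have := meval_D 1 0 _ _ P3DA.
  rewrite A2E A3E !mevalC meval_P2_half meval_P3_half => P3_10 P2_10.
  have DA3 : D.@[pt 1 0] * A3@_0 = 0 by rewrite -P3_10; ring.
  have DA2 : D.@[pt 1 0] * A2@_0 = 16 by rewrite -P2_10; ring.
  have D10_neq0 : D.@[pt 1 0] != 0.
    by apply/eqP => D10; move: DA2; rewrite D10 mul0r => /esym/eqP; rewrite pnatr_eq0.
  move/eqP: DA3; rewrite mulf_eq0 (negbTE D10_neq0) /= => /eqP A3_0.
  by move: P3_half_neq0; rewrite P3DA A3E A3_0 mpolyC0 mulr0 eqxx.
Qed.

Lemma rat_map_degree_half :
  rat_map_degree_is (G3_P (-1 : R) (2^-1)) (G3_Q (-1) (2^-1)) 2.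
Proof.
split.
  apply: (meval_neq0 (v := pt 0 0)); rewrite meval_G3_Q_origin.
  by rewrite mulf_neq0 ?pnatr_eq0 // fmorph_eq0 oppr_eq0 oner_eq0.
exists P_half, Q_half; split.
- exact: Q_half_neq0.
- exact: reduced_half.
- by move=> k; rewrite G3_P_half_factor G3_Q_half_factor mulrAC mulrC.
rewrite /rep_degree /mtdeg msize_Q_half; apply/maxn_idPr/bigmax_leqP => k _.
by move: (msize_P_half k); case: (msize _) => [|[|[|[|m]]]].
Qed.

End G3Degenerate.

Theorem lemma4p2 (R : rcfType) (e s : R) :
  (e = 1 \/ e = -1) -> 0 <= s ->
  (rat_map_degree_is (G3_P e s) (G3_Q e s) 2 <-> (e = -1 /\ s = 2^-1)).
Proof.
move=> e_pm1 s_ge0; split; last by case=> -> ->; exact: rat_map_degree_half.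
case=> _ [P' [Q' [Q'_neq0 _ PQ' /rep_degree_msize_le P'3]]].
have e2 : e ^+ 2 = 1 by case: e_pm1 => ->; rewrite ?sqrrN expr1n.
have e4s2 : e + 4 * s ^+ 2 = 0.
  apply/eqP; apply: contraNT Q'_neq0 => e4s2_neq0; apply/eqP.
  exact: (G3_P2_cofactor_eq0 e2 e4s2_neq0 (P'3 (@Ordinal 3 1 isT)) (PQ' (@Ordinal 3 1 isT))).
by case: e_pm1 e4s2 => -> e4s2; nra.
Qed.
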